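(* Let $\mathbf a=(a_i)_{i\ge0}$ be the fixed point beginning with $0$ of the $3$-uniform morphism $\sigma$ on $\{0,1,2\}$ defined by $\sigma(0)=010$, $\sigma(1)=102$, $\sigma(2)=122$, with letters viewed as elements of $\mathbb{F}_3$, and let $f_{\mathbf a}(T)=\sum_{i\ge0}a_iT^{-i}\in\mathbb{F}_3[[T^{-1}]]$. Then $$2.66\le\mu(f_{\mathbf a})\le2.81.$$
   Context: The fixed point is $\sigma^\infty(0)=\lim_n\sigma^n(0)=010102010\cdots$. Fix a real $|T|>1$; $|g|=|T|^{-i_0}$ for $g\in\mathbb{F}_3((T^{-1}))$ with leading term $T^{-i_0}$. The irrationality exponent $\mu(f)$ is the supremum of real $\tau$ such that $|f-P/Q|<|Q|^{-\tau}$ has infinitely many solutions $(P,Q)\in\mathbb{F}_3[T]^2$, $Q\ne0$. *)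

From HB Require Import structures.
From mathcomp Require Import all_boot all_order all_algebra.
From mathcomp Require Import all_classical all_reals all_analysis.
Set Implicit Arguments. Unset Strict Implicit. Unset Printing Implicit Defensive.
Import Order.TTheory GRing.Theory Num.Theory.
Local Open Scope classical_set_scope.
Local Open Scope ring_scope.

Notation F3 := 'F_3.

Definition sigma (x : F3) : seq F3 :=
  if x == 0 then [:: 0; 1; 0]
  else if x == 1 then [:: 1; 0; 2%:R]
  else [:: 1; 2%:R; 2%:R].

Definition sigma_word (w : seq F3) : seq F3 := flatten (map sigma w).

Definition sigma_iter (n : nat) : seq F3 := iter n sigma_word [:: 0].

(* The fixed point sigma^oo(0) = lim_n sigma^n(0): its i-th letter is the
   i-th letter of sigma^(i+1)(0) (which has length 3^(i+1) > i, and
   sigma^n(0) is a prefix of sigma^(n+1)(0)). *)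
Definition afix (i : nat) : F3 := nth 0 (sigma_iter i.+1) i.

(* Elements of F_3((T^-1)) are represented by their coefficient function
   c : int -> F_3 (c k = coefficient of T^k), with support bounded above. *)
Definition laurent := int -> F3.

(* The absolute value |g| = |T|^(k0) where T^(k0) is the leading term of g,
   |0| = 0; here tT stands for the real |T| > 1.  Written as a supremum
   (sup of the empty set is 0). *)
Definition labs {R : realType} (tT : R) (g : laurent) : R :=
  sup [set powR tT (k%:~R) | k in [set k : int | g k != 0]].

Definition poly_laurent (P : {poly F3}) : laurent :=
  fun k => match k with Posz n => P`_n | Negz _ => 0 end.

Definition f_a : laurent :=
  fun k => match k with Posz 0 => afix 0 | Posz _ => 0 | Negz n => afix n.+1 end.

Definition poly_mul_laurent (Q : {poly F3}) (g : laurent) : laurent :=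
  fun k => \sum_(j < size Q) Q`_j * g (k - (j%:Z)).

Definition lsub (g h : laurent) : laurent := fun k => g k - h k.

(* |f - P/Q|, computed as |Q f - P| / |Q| (multiplicativity of the
   absolute value; P/Q is the Laurent expansion of the rational function). *)
Definition dist_rat {R : realType} (tT : R) (f : laurent) (P Q : {poly F3}) : R :=
  labs tT (lsub (poly_mul_laurent Q f) (poly_laurent P)) / labs tT (poly_laurent Q).

Definition approx_exponents {R : realType} (tT : R) (f : laurent) : set R :=
  [set tau : R | ~ finite_set
     [set PQ : {poly F3} * {poly F3} | PQ.2 != 0 /\
        dist_rat tT f PQ.1 PQ.2 < powR (labs tT (poly_laurent PQ.2)) (- tau)]].

Definition irrationality_exponent {R : realType} (tT : R) (f : laurent) : \bar R :=
  ereal_sup [set x%:E | x in approx_exponents tT f].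

From HB Require Import structures.
From mathcomp Require Import all_boot all_order all_algebra.
From mathcomp Require Import all_classical all_reals all_analysis.
From mathcomp Require Import zify ring lra.
Set Implicit Arguments. Unset Strict Implicit. Unset Printing Implicit Defensive.
Import Order.TTheory GRing.Theory Num.Theory.
Local Open Scope ring_scope.

(* The fixed point has long repetitions: its prefix of length 16 * 3^k has
   period 6 * 3^k ([period k] and [overhang k] = 10 * 3^k).  Hence
   q = T^(6 * 3^k) - 1 and the polynomial p read off the first period satisfy
   |q f - p| = |T|^(-10 * 3^k) = |q|^(1 - 16/6), so mu >= 8/3 > 2.66.
   Conversely, let |Q f - P| < |Q|^(1 - tau) with tau > 2.81 and
   10 * 3^j <= deg Q < 30 * 3^j, and take the repetition at level j + 1
   (period 18 * 3^j, overhang 30 * 3^j).  As tau > 2.81, Q f - P vanishes in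
   degrees >= -18 * 3^j, so both sides of the identity
   q (Q f - P) - Q (q f - p) = Q p - q P vanish in degrees >= 0: Q p = q P.
   Since q is a power of T^2 - 1 in characteristic 3 and p(1), p(-1) are
   nonzero, q divides Q.  Then Q (q f - p) has the nonzero coefficient
   lead_coef Q * a_(30 * 3^j) in degree deg Q - 30 * 3^j, so Q f - P has a
   nonzero coefficient in degree >= deg Q - 48 * 3^j; together with
   deg Q >= deg q = 18 * 3^j this forces tau < 48/18.  The finitely many Q of
   degree < 10 give only finitely many solutions. *)

Lemma sigmaE (x : F3) : sigma x = [:: (x != 0)%:R; 1 - x; - (x != 0)%:R].
Proof. by case: x => [[|[|[|//]]] ?]; apply/eqP; vm_compute. Qed.

Local Open Scope nat_scope.

Lemma size_sigma x : size (sigma x) = 3.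
Proof. by rewrite sigmaE. Qed.

Lemma size_sigma_word w : size (sigma_word w) = 3 * size w.
Proof.
elim: w => //= x w IH.
by rewrite /sigma_word /= size_cat size_sigma -/(sigma_word w) IH mulnS.
Qed.

Lemma size_sigma_iter n : size (sigma_iter n) = 3 ^ n.
Proof. by elim: n => //= n IH; rewrite size_sigma_word IH expnS. Qed.

Lemma nth_sigma_word w i j : i < size w -> j < 3 ->
  nth 0%R (sigma_word w) (3 * i + j) = nth 0%R (sigma (nth 0%R w i)) j.
Proof.
elim: w i => // x w IH [|i] /= Hi Hj; rewrite /sigma_word /= nth_cat size_sigma.
  by rewrite muln0 add0n Hj.
have -> : (3 * i.+1 + j < 3) = false by lia.
have -> : 3 * i.+1 + j - 3 = 3 * i + j by lia.
by rewrite -/(sigma_word w) IH.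
Qed.

Lemma nth_sigma_iterS n i : i < 3 ^ n ->
  nth 0%R (sigma_iter n.+1) i = nth 0%R (sigma_iter n) i.
Proof.
elim: n i => [|n IH] i Hi; first by case: i Hi => // _; vm_compute.
have Hi3 : i %/ 3 < 3 ^ n by rewrite expnS in Hi; lia.
have E m : sigma_iter m.+1 = sigma_word (sigma_iter m) by [].
rewrite (divn_eq i 3) mulnC (E n) (E n.+1) !nth_sigma_word ?size_sigma_iter ?ltn_mod ?IH //.
by rewrite expnS; lia.
Qed.

Lemma nth_sigma_iter_le n m i : n <= m -> i < 3 ^ n ->
  nth 0%R (sigma_iter m) i = nth 0%R (sigma_iter n) i.
Proof.
move=> /subnK <- Hi; elim: (m - n) => // d IH.
by rewrite addSn nth_sigma_iterS // (leq_trans Hi) // leq_pexp2l // leq_addl.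
Qed.

Lemma afix_nth_sigma_iter n i : i < 3 ^ n -> afix i = nth 0%R (sigma_iter n) i.
Proof.
move=> Hi; have Hi1 : i < 3 ^ i.+1 by rewrite ltnW // ltn_expl.
rewrite /afix -(nth_sigma_iter_le (leq_maxl i.+1 n) Hi1).
by rewrite (nth_sigma_iter_le (leq_maxr _ _) Hi).
Qed.

Lemma afix_sigma i j : j < 3 -> afix (3 * i + j) = nth 0%R (sigma (afix i)) j.
Proof.
move=> Hj; have Hi : i < 3 ^ i.+1 by rewrite ltnW // ltn_expl.
rewrite (@afix_nth_sigma_iter i.+2); last by rewrite (expnS _ i.+1); lia.
have -> : sigma_iter i.+2 = sigma_word (sigma_iter i.+1) by [].
by rewrite nth_sigma_word ?size_sigma_iter // -afix_nth_sigma_iter.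
Qed.

Lemma afix_mul3 i : afix (3 * i) = (afix i != 0%R)%:R.
Proof. by rewrite -[3 * i]addn0 afix_sigma // sigmaE. Qed.

Lemma afix_pow3M_eq0 k i : (afix (3 ^ k * i) == 0%R) = (afix i == 0%R).
Proof.
elim: k => [|k IH]; first by rewrite mul1n.
rewrite expnS -mulnA afix_mul3 -IH.
by case: (afix (3 ^ k * i) == 0%R); rewrite /= ?eqxx ?oner_eq0.
Qed.

Lemma afix_small i : i < 27 -> afix i = nth 0%R (sigma_iter 3) i.
Proof. exact: (@afix_nth_sigma_iter 3). Qed.

Definition period k := 2 * 3 ^ k.+1.
Definition overhang k := 10 * 3 ^ k.

Lemma period_gt0 k : 0 < period k.
Proof. by rewrite /period muln_gt0 expn_gt0. Qed.

Lemma afix_periodic k m : m < overhang k -> afix (m + period k) = afix m.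
Proof.
rewrite /overhang /period; elim: k m => [|k IH] m Hm.
  rewrite !afix_small; try lia.
  by do 10 (case: m Hm => [|m] Hm; first by vm_compute); lia.
have Hm3 : m %/ 3 < 10 * 3 ^ k by rewrite expnS in Hm; lia.
have -> : m + 2 * 3 ^ k.+2 = 3 * (m %/ 3 + 2 * 3 ^ k.+1) + m %% 3.
  by rewrite (expnS _ k.+1) {1}(divn_eq m 3); lia.
by rewrite afix_sigma ?ltn_mod // IH // -afix_sigma ?ltn_mod // mulnC -divn_eq.
Qed.

Lemma afix_period k : afix (period k) = 0%R.
Proof. by apply/eqP; rewrite /period mulnC afix_pow3M_eq0 afix_small. Qed.

Lemma afix_overhang k : afix (overhang k) = 0%R.
Proof. by apply/eqP; rewrite /overhang mulnC afix_pow3M_eq0 afix_small. Qed.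

Lemma afix_overhang_period k : afix (overhang k + period k) != 0%R.
Proof.
have -> : overhang k + period k = 3 ^ k * 16 by rewrite /overhang /period expnS; lia.
by rewrite afix_pow3M_eq0 afix_small.
Qed.

Local Open Scope ring_scope.

Lemma exp3B (R : comNzRingType) (y z : R) : 3%:R = 0 :> R ->
  (y - z) ^+ 3 = y ^+ 3 - z ^+ 3.
Proof.
move=> char3.
have -> : (y - z) ^+ 3 = y ^+ 3 - z ^+ 3 - 3%:R * (y ^+ 2 * z - y * z ^+ 2) by ring.
by rewrite char3 mul0r subr0.
Qed.

Lemma F3_char3 : 3%:R = 0 :> F3.
Proof. exact/val_inj. Qed.

Lemma XnsubC_pow3 m : ('X^(2 * 3 ^ m) - 1 : {poly F3}) = ('X^2 - 1) ^+ (3 ^ m).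
Proof.
elim: m => [|m IH]; first by rewrite muln1.
rewrite expnSr [RHS]exprM -IH exp3B ?expr1n -?exprM ?mulnA //.
by rewrite -polyC_natr F3_char3.
Qed.

Definition afix_sum (c : F3) N := \sum_(i < N) c ^+ i * afix i.

Lemma sum_expr_sqr1 (R : nzRingType) (c : R) M : c ^+ 2 = 1 ->
  \sum_(i < 2 * M) c ^+ i = M%:R * (1 + c).
Proof.
move=> c2; elim: M => [|M IH]; first by rewrite big_ord0 mul0r.
have cM : c ^+ (2 * M) = 1 by rewrite exprM c2 expr1n.
by rewrite mulnS !big_ord_recr /= IH exprS cM mulr1 mulrSr mulrDl mul1r addrA.
Qed.

(* Block i of the fixed point is sigma a_i = [:: s; 1 - a_i; - s], which
   contributes c ^+ (3 * i) * (s + c * (1 - a_i) - c ^+ 2 * s) = c ^+ i * c * (1 - a_i). *)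
Lemma afix_sum_mul3 (c : F3) N : c ^+ 2 = 1 ->
  afix_sum c (3 * N) = c * \sum_(i < N) c ^+ i - c * afix_sum c N.
Proof.
move=> c2; rewrite /afix_sum; elim: N => [|N IH]; first by rewrite !big_ord0 !mulr0 subr0.
have c3N j : c ^+ (3 * N + j) = c ^+ N * c ^+ j.
  by rewrite exprD exprM exprS c2 mulr1.
rewrite mulnS !big_ord_recr /= IH.
rewrite -[(3 * N).+2]addn2 -[(3 * N).+1]addn1 -[X in c ^+ X * afix X](addn0 (3 * N)).
rewrite !c3N !afix_sigma // sigmaE /=.
rewrite expr0 expr1 c2; ring.
Qed.

Lemma sqrf_eq1_neq0 (F : fieldType) (c : F) : c ^+ 2 = 1 -> c != 0.
Proof. by move=> c2; apply: contra_eq_neq c2 => ->; rewrite expr0n eq_sym oner_neq0. Qed.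

Lemma afix_sum_period_neq0 (c : F3) k : c ^+ 2 = 1 -> afix_sum c 6 != 0 ->
  afix_sum c (period k) != 0.
Proof.
move=> c2 h6; elim: k => [//|k IH].
have c0 : c != 0 := sqrf_eq1_neq0 c2.
rewrite /period (expnS _ k.+1) mulnCA afix_sum_mul3 // sum_expr_sqr1 //.
by rewrite natrX F3_char3 expr0n /= mul0r mulr0 sub0r oppr_eq0 mulf_neq0.
Qed.

Definition approx_den k : {poly F3} := 'X^(period k) - 1.
(* The reversed first period, so that approx_den k * f_a - approx_num k has
   no terms of nonnegative degree. *)
Definition approx_num k : {poly F3} := \poly_(i < (period k).+1) afix (period k - i).

Lemma size_approx_den k : size (approx_den k) = (period k).+1.
Proof. by rewrite size_XnsubC ?period_gt0. Qed.

Lemma approx_den_neq0 k : approx_den k != 0.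
Proof. by rewrite -size_poly_eq0 size_approx_den. Qed.

Lemma horner_approx_num k (c : F3) : c ^+ 2 = 1 ->
  (approx_num k).[c] = afix_sum c (period k).
Proof.
move=> c2; rewrite /approx_num horner_poly (reindex_inj rev_ord_inj) /= big_ord_recr /=.
rewrite subnn subn0 afix_period mul0r addr0; apply: eq_bigr => i _ /=.
have cS : c ^+ period k = 1 by rewrite exprM c2 expr1n.
have -> : (period k - (period k - i))%N = i by have := ltn_ord i; lia.
have ci : c ^+ i \is a GRing.unit by rewrite unitrX // unitfE (sqrf_eq1_neq0 c2).
rewrite mulrC; congr (_ * _); apply: (mulIr ci).
rewrite -!exprD subSS subnK; last exact: ltnW.
by rewrite cS addnn -mul2n exprM c2 expr1n.
Qed.

Lemma coprimep_approx k : coprimep (approx_den k) (approx_num k).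
Proof.
rewrite coprimep_sym /approx_den /period XnsubC_pow3 coprimep_expr //.
have -> : ('X^2 - 1 : {poly F3}) = ('X - 1%:P) * ('X - (-1)%:P).
  by rewrite polyCN polyC1; ring.
rewrite coprimepMr !coprimep_XsubC /root !horner_approx_num ?expr1n ?sqrrN ?expr1n //.
by rewrite !afix_sum_period_neq0 ?expr1n ?sqrrN ?expr1n // /afix_sum !big_ord_recr big_ord0.
Qed.

Lemma big_ord_widen_eq0 (V : nmodType) (F : nat -> V) m n : (m <= n)%N ->
  (forall j, (m <= j < n)%N -> F j = 0) -> \sum_(j < m) F j = \sum_(j < n) F j.
Proof.
move=> mn F0; rewrite (big_ord_widen _ _ mn) big_mkcond; apply: eq_bigr => j _.
by case: ltnP => // jm; rewrite F0 // jm ltn_ord.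
Qed.

Lemma poly_laurent_neg p k : k < 0 -> poly_laurent p k = 0.
Proof. by case: k. Qed.

Lemma poly_mul_laurentB Q g h k :
  poly_mul_laurent Q (lsub g h) k = poly_mul_laurent Q g k - poly_mul_laurent Q h k.
Proof. by rewrite -sumrB; apply: eq_bigr => j _; rewrite mulrBr. Qed.

Lemma poly_mul_laurent_poly Q p k :
  poly_mul_laurent Q (poly_laurent p) k = poly_laurent (Q * p) k.
Proof.
case: k => [n|n]; last first.
  by rewrite /poly_mul_laurent big1 // => j _; rewrite poly_laurent_neg ?mulr0.
pose F j := Q`_j * poly_laurent p (n%:Z - j%:Z).
have F_n j : (j <= n)%N -> F j = Q`_j * p`_(n - j).
  by move=> jn; rewrite /F subzn.
rewrite /= coefM.
have -> : \sum_(j < n.+1) Q`_j * p`_(n - j) = \sum_(j < n.+1) F j.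
  by apply: eq_bigr => j _; rewrite F_n // -ltnS.
rewrite (big_ord_widen_eq0 (F := F) (leq_addl (size Q) n.+1)); last first.
  by move=> j /andP[nj _]; rewrite /F poly_laurent_neg ?mulr0 //; lia.
rewrite /poly_mul_laurent -/F (big_ord_widen_eq0 (F := F) (leq_addr n.+1 (size Q))) 1?addnC //.
by move=> j /andP[Qj _]; rewrite /F nth_default ?mul0r.
Qed.

Lemma poly_mul_laurent_XnsubC S g k : (0 < S)%N ->
  poly_mul_laurent ('X^S - 1) g k = g (k - S%:Z) - g k.
Proof.
case: S => [//|S _]; rewrite /poly_mul_laurent size_XnsubC // big_ord_recr big_ord_recl /=.
rewrite big1 => [|j _]; last first.
  by rewrite coefB coefXn coef1 /bump leq0n add1n eqSS ltn_eqF ?subrr ?mul0r.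
by rewrite !coefB !coefXn !coef1 eqxx /= !subr0 sub0r mulN1r mul1r addr0 addrC.
Qed.

Lemma poly_mul_laurent_XnsubC_comm S Q g k : (0 < S)%N ->
  poly_mul_laurent ('X^S - 1) (poly_mul_laurent Q g) k =
  poly_mul_laurent Q (poly_mul_laurent ('X^S - 1) g) k.
Proof.
move=> S0; rewrite poly_mul_laurent_XnsubC //.
have -> : poly_mul_laurent Q (poly_mul_laurent ('X^S - 1) g) k =
    \sum_(j < size Q) Q`_j * (g (k - j%:Z - S%:Z) - g (k - j%:Z)).
  by apply: eq_bigr => j _; rewrite poly_mul_laurent_XnsubC.
by rewrite /poly_mul_laurent -sumrB; apply: eq_bigr => j _; rewrite mulrBr addrAC.
Qed.

Lemma poly_mul_laurent_eq0 (Q : {poly F3}) (g : laurent) (m k : int) :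
  (forall x, m < x -> g x = 0) ->
  m + ((size Q).-1)%:Z < k -> poly_mul_laurent Q g k = 0.
Proof.
move=> g0 mk; rewrite /poly_mul_laurent big1 // => j _.
by rewrite g0 ?mulr0 //; have := ltn_ord j; lia.
Qed.

Lemma poly_mul_laurent_lead (Q : {poly F3}) (g : laurent) (m : int) :
  (forall x, m < x -> g x = 0) ->
  poly_mul_laurent Q g (m + ((size Q).-1)%:Z) = lead_coef Q * g m.
Proof.
move=> g0; case: (posnP (size Q)) => [/eqP|Q0].
  rewrite size_poly_eq0 => /eqP ->.
  by rewrite /poly_mul_laurent size_poly0 big_ord0 lead_coef0 mul0r.
have nQ : ((size Q).-1 < size Q)%N by rewrite prednK.
rewrite /poly_mul_laurent (bigD1 (Ordinal nQ)) //= addrK lead_coefE big1 ?addr0 //.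
move=> j /eqP/val_eqP/= jn; rewrite g0 ?mulr0 //.
by have := ltn_ord j; lia.
Qed.

Lemma f_a_neg (n : nat) : f_a (- n%:Z) = afix n.
Proof. by case: n. Qed.

Lemma f_a_ge0 (k : int) : 0 <= k -> f_a k = 0.
Proof. by case: k => [[|i]|//] _ //; vm_compute. Qed.

Definition approx_res P Q : laurent := lsub (poly_mul_laurent Q f_a) (poly_laurent P).

Definition approx_err k := approx_res (approx_num k) (approx_den k).

Lemma approx_err_eq0 k (x : int) : - (overhang k)%:Z < x -> approx_err k x = 0.
Proof.
move=> hx; rewrite /approx_err /approx_res /lsub /approx_den.
rewrite poly_mul_laurent_XnsubC ?period_gt0 //.
case: (lerP 0 x) => x0.
  case: x x0 hx => [i|//] _ _; rewrite [f_a (Posz i)]f_a_ge0 // subr0 /= coef_poly.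
  case: ltnP => hi.
    have -> : i%:Z - (period k)%:Z = - (period k - i)%N%:Z by lia.
    by rewrite f_a_neg subrr.
  by rewrite f_a_ge0 ?subrr //; lia.
have [m ?] : exists m : nat, x = - m%:Z by exists `|x|%N; lia.
subst x.
have -> : - m%:Z - (period k)%:Z = - (m + period k)%N%:Z by lia.
by rewrite poly_laurent_neg ?subr0 ?f_a_neg ?afix_periodic ?subrr //; lia.
Qed.

Lemma approx_err_overhang_neq0 k : approx_err k (- (overhang k)%:Z) != 0.
Proof.
rewrite /approx_err /approx_res /lsub /approx_den poly_mul_laurent_XnsubC ?period_gt0 //.
have -> : - (overhang k)%:Z - (period k)%:Z = - (overhang k + period k)%N%:Z by lia.
rewrite poly_laurent_neg ?f_a_neg ?afix_overhang ?subr0 ?afix_overhang_period //.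
by rewrite /overhang; lia.
Qed.


Lemma approx_res_supp P (Q : {poly F3}) x :
  approx_res P Q x != 0 -> x <= ((size Q).-1 + size P)%N%:Z.
Proof.
apply: contraNle => Px; rewrite /approx_res /lsub (@poly_mul_laurent_eq0 _ _ 0) => [|y|].
- case: x Px => [i|//]; rewrite ltz_nat => Pi.
  by rewrite /= nth_default ?subrr // (leq_trans (leq_addl _ _) (ltnW Pi)).
- by move=> /ltW /f_a_ge0.
- by rewrite add0r (le_lt_trans _ Px) // lez_nat leq_addr.
Qed.

Lemma approx_res_identity k P Q x :
  poly_mul_laurent (approx_den k) (approx_res P Q) x - poly_mul_laurent Q (approx_err k) x =
  poly_laurent (Q * approx_num k) x - poly_laurent (approx_den k * P) x.
Proof.
rewrite /approx_err /approx_res !poly_mul_laurentB poly_mul_laurent_XnsubC_comm ?period_gt0 //.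
by rewrite -/(approx_den k) !poly_mul_laurent_poly; ring.
Qed.

Section ApproxRelation.
Variables (k : nat) (P Q : {poly F3}).

Lemma approx_num_relation : ((size Q).-1 < overhang k)%N ->
  (forall x : int, - (period k)%:Z <= x -> approx_res P Q x = 0) ->
  Q * approx_num k = approx_den k * P.
Proof.
move=> Q_lt res0; apply/eqP; rewrite -subr_eq0; apply/eqP/polyP => i.
rewrite coef0 coefB -!/(poly_laurent _ (Posz i)) -approx_res_identity.
have errQ0 : poly_mul_laurent Q (approx_err k) i = 0.
  apply: (poly_mul_laurent_eq0 (m := - (overhang k)%:Z)); first exact: approx_err_eq0.
  by have : - (overhang k)%:Z + ((size Q).-1)%:Z < i by lia.
by rewrite errQ0 poly_mul_laurent_XnsubC ?period_gt0 ?res0 ?subrr //; lia.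
Qed.

Lemma approx_res_neq0_far : Q != 0 -> Q * approx_num k = approx_den k * P ->
  exists2 x : int, ((size Q).-1)%:Z - (overhang k)%:Z - (period k)%:Z <= x &
    approx_res P Q x != 0.
Proof.
move=> Q0 rel; pose M := - (overhang k)%:Z + ((size Q).-1)%:Z.
have : poly_mul_laurent (approx_den k) (approx_res P Q) M != 0.
  have -> : poly_mul_laurent (approx_den k) (approx_res P Q) M =
      poly_mul_laurent Q (approx_err k) M.
    by apply/eqP; rewrite -subr_eq0 approx_res_identity rel subrr.
  rewrite poly_mul_laurent_lead => [|x]; last exact: approx_err_eq0.
  by rewrite mulf_neq0 ?lead_coef_eq0 ?approx_err_overhang_neq0.
rewrite poly_mul_laurent_XnsubC ?period_gt0 //.
have [resM|resM] := eqVneq (approx_res P Q M) 0; last by exists M => //; lia.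
by rewrite resM subr0 => ?; exists (M - (period k)%:Z) => //; lia.
Qed.

End ApproxRelation.

Section AbsoluteValue.
Local Open Scope classical_set_scope.
Local Open Scope ring_scope.
Variables (R : realType) (tT : R).
Hypothesis htT : 1 < tT.

Let tT_gt0 : 0 < tT. Proof. exact: lt_trans htT. Qed.

Lemma ltr_powR : {mono powR tT : x y / x < y}.
Proof.
move=> x y; rewrite -[in LHS]ltr_ln ?posrE ?powR_gt0 // !ln_powR ltr_pM2r //.
exact: ln_gt0.
Qed.

Lemma labs_le_powR (g : laurent) (r : R) :
  (forall k, g k != 0 -> k%:~R <= r) -> labs tT g <= tT `^ r.
Proof.
move=> g_le; rewrite /labs.
have [[k0 gk0]|g0] := pselect (exists k, g k != 0).
  apply: ge_sup; first by exists (tT `^ k0%:~R), k0.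
  by move=> _ [k gk <-]; apply: ler_powR (ltW htT) _ _ (g_le k gk).
set A := (X in sup X); suff -> : A = set0 by rewrite sup0 powR_ge0.
by apply/seteqP; split => // x [k gk _]; apply: g0; exists k.
Qed.

Lemma powR_le_labs (g : laurent) (m k : int) :
  (forall x, g x != 0 -> x <= m) -> g k != 0 -> tT `^ k%:~R <= labs tT g.
Proof.
move=> g_le gk; apply: ub_le_sup; last by exists k.
by exists (tT `^ m%:~R) => _ [x gx <-]; rewrite ler_powR ?(ltW htT) // ler_int g_le.
Qed.

Lemma labs_poly_laurent (Q : {poly F3}) : Q != 0 ->
  labs tT (poly_laurent Q) = tT `^ ((size Q).-1)%:R.
Proof.
move=> Q0; have supp x : poly_laurent Q x != 0 -> x <= ((size Q).-1)%:Z.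
  case: x => //= n Qn; rewrite lez_nat -ltnS prednK ?size_poly_gt0 //.
  by apply: contraNT Qn; rewrite -leqNgt => /(nth_default 0) ->.
apply/eqP; rewrite eq_le labs_le_powR => [|x /supp]; last by rewrite -(ler_int R).
have := powR_le_labs supp (k := ((size Q).-1)%:Z).
by rewrite pmulrn /= -lead_coefE lead_coef_eq0 => /(_ Q0).
Qed.

Lemma dist_rat_lt_powR f P Q (tau : R) : Q != 0 ->
  (dist_rat tT f P Q < labs tT (poly_laurent Q) `^ (- tau)) =
  (labs tT (lsub (poly_mul_laurent Q f) (poly_laurent P)) <
     tT `^ (((size Q).-1)%:R * (1 - tau))).
Proof.
move=> Q0; rewrite /dist_rat labs_poly_laurent // -powRrM ltr_pdivrMr ?powR_gt0 //.
by rewrite -powRD ?(gt_eqF tT_gt0) ?implybT // mulrBr mulr1 addrC mulrN.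
Qed.

End AbsoluteValue.

Lemma pow3_bracket n : (10 <= n)%N -> exists j, (10 * 3 ^ j <= n < 10 * 3 ^ j.+1)%N.
Proof.
elim/ltn_ind: n => n IH n10; have [n30|n30] := ltnP n 30; first by exists 0%N; lia.
have [j /andP[lo hi]] := IH (n %/ 3)%N ltac:(lia) ltac:(lia).
by exists j.+1; move: hi; rewrite !expnS; lia.
Qed.

Section Approximation.
Variables (R : realType) (tT : R).
Hypothesis htT : 1 < tT.

Let intr_nat (n : nat) : n%:Z%:~R = n%:R :> R. Proof. by []. Qed.

Lemma dist_rat_approx_lt k : dist_rat tT f_a (approx_num k) (approx_den k) <
  labs tT (poly_laurent (approx_den k)) `^ (- (266 / 100)).
Proof.
rewrite dist_rat_lt_powR ?approx_den_neq0 // size_approx_den /=.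
have err_le : labs tT (approx_err k) <= tT `^ (- (overhang k)%:R).
  apply: (labs_le_powR htT) => x ex.
  have : x <= - (overhang k)%:Z by rewrite leNgt; apply: contra ex => /approx_err_eq0 ->.
  by rewrite -(ler_int R) intrN.
apply: (le_lt_trans err_le); rewrite (ltr_powR htT).
have -> : period k = (6 * 3 ^ k)%N by rewrite /period expnS mulnA.
rewrite /overhang !natrM; have : 0 < (3 ^ k)%:R :> R by rewrite ltr0n expn_gt0.
lra.
Qed.

Lemma approx_res_lt P Q (tau : R) x : Q != 0 ->
  dist_rat tT f_a P Q < labs tT (poly_laurent Q) `^ (- tau) ->
  approx_res P Q x != 0 -> x%:~R < ((size Q).-1)%:R * (1 - tau).
Proof.
move=> Q0; rewrite dist_rat_lt_powR // => res_lt res_x.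
by rewrite -(ltr_powR htT) (le_lt_trans _ res_lt) // (powR_le_labs htT (@approx_res_supp P Q)).
Qed.

Lemma no_good_approx (tau : R) (P Q : {poly F3}) :
  281 / 100 < tau -> Q != 0 -> (10 <= (size Q).-1)%N ->
  ~ dist_rat tT f_a P Q < labs tT (poly_laurent Q) `^ (- tau).
Proof.
move=> tau_gt Q0 n_ge approx; have res_lt := approx_res_lt Q0 approx.
move: n_ge res_lt; set n := (size Q).-1 => n_ge res_lt.
have [j /andP[lo hi]] := pow3_bracket n_ge.
pose t : R := (3 ^ j)%:R; have t_gt0 : 0 < t by rewrite ltr0n expn_gt0.
have periodE : (period j.+1)%:R = 18 * t :> R.
  by rewrite -natrM /period !expnS mulnA mulnA.
have overhangE : (overhang j.+1)%:R = 30 * t :> R.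
  by rewrite -natrM /overhang expnS mulnA.
have nR : 10 * t <= n%:R by rewrite /t -natrM ler_nat.
have n_lt : (n < overhang j.+1)%N := hi.
(* n * (tau - 1) > 1.81 * 10 * 3 ^ j > period j.+1: this is where 2.81 comes from. *)
have res0 x : - (period j.+1)%:Z <= x -> approx_res P Q x = 0.
  move=> x_ge; apply/eqP; apply: contraTT x_ge => /res_lt x_lt.
  have : 0 <= (n%:R - 10 * t) * (tau - 1) by apply: mulr_ge0; lra.
  have : 0 <= t * (tau - 281 / 100) by apply: mulr_ge0; lra.
  rewrite -ltNge -(ltr_int R) intrN intr_nat periodE; lra.
have rel := approx_num_relation n_lt res0.
have period_le : (period j.+1 <= n)%N.
  have : approx_den j.+1 %| Q by rewrite -(Gauss_dvdpl _ (coprimep_approx _)) rel dvdp_mulIl.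
  by move=> /(dvdp_leq Q0); rewrite size_approx_den /n; case: (size Q).
have [x x_ge res_x] := approx_res_neq0_far Q0 rel.
have := res_lt x res_x; rewrite -(ler_int R) !intrB !intr_nat periodE overhangE in x_ge.
rewrite -(ler_nat R) periodE in period_le.
nra.
Qed.

Lemma good_approx_size_num (tau : R) (P Q : {poly F3}) : 1 < tau -> Q != 0 ->
  dist_rat tT f_a P Q < labs tT (poly_laurent Q) `^ (- tau) -> (size P <= size Q)%N.
Proof.
move=> tau_gt Q0 approx; apply/leq_sizeP => i Qi.
have : approx_res P Q i = 0.
  apply/eqP; apply: contraTT (ler0n R i) => /(approx_res_lt Q0 approx).
  rewrite intr_nat -ltNge => /lt_le_trans; apply.
  by rewrite mulr_ge0_le0 ?ler0n // subr_le0 ltW.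
rewrite /approx_res /lsub (@poly_mul_laurent_eq0 _ _ 0) ?sub0r => [/eqP|x|].
- by rewrite oppr_eq0 => /eqP.
- by move/ltW/f_a_ge0.
- by rewrite add0r ltz_nat -ltnS prednK ?size_poly_gt0.
Qed.

End Approximation.

Lemma finite_poly_size (F : finNzRingType) n : finite_set [set P : {poly F} | (size P <= n)%N].
Proof.
have := finite_image (fun c : {ffun 'I_n.+1 -> F} => \poly_(i < n) c (inord i))
  (@finite_finset _ [set: {ffun 'I_n.+1 -> F}]).
apply: sub_finite_set => P /= Pn.
exists [ffun i : 'I_n.+1 => P`_i] => //; apply/polyP => i; rewrite coef_poly.
case: ltnP => [iP|/(leq_trans Pn) Pi]; last by rewrite nth_default.
by rewrite ffunE inordK // ltnW.
Qed.

Local Open Scope classical_set_scope.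

Lemma approx_exponents_ge (R : realType) (tT : R) : 1 < tT ->
  approx_exponents tT f_a (266 / 100).
Proof.
move=> htT fin; apply: infinite_nat.
pose approx k := (approx_num k, approx_den k).
have approx_inj : injective approx.
  move=> k1 k2 [_ /(congr1 (fun p : {poly F3} => size p))/eqP].
  rewrite !size_approx_den eqSS /period.
  by rewrite eqn_pmul2l // eqn_exp2l // eqSS => /eqP.
apply: sub_finite_set (finite_preimage (in2W approx_inj) fin) => k _ /=.
by split; [exact: approx_den_neq0 | exact: dist_rat_approx_lt].
Qed.

Lemma approx_exponents_le (R : realType) (tT : R) (tau : R) : 1 < tT ->
  approx_exponents tT f_a tau -> tau <= 281 / 100.
Proof.
move=> htT; apply: contraPle => tau_gt; apply.
apply: sub_finite_set (finite_setX (finite_poly_size F3 10) (finite_poly_size F3 10)).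
move=> [P Q] /= [Q0 approx].
have Q_small : (size Q <= 10)%N.
  rewrite leqNgt; apply/negP => Q_big; apply: (no_good_approx htT tau_gt Q0 _ approx).
  by rewrite -ltnS prednK ?size_poly_gt0.
split=> //; apply: leq_trans Q_small.
by apply: (good_approx_size_num htT _ Q0 approx); apply: lt_trans tau_gt; lra.
Qed.

Local Open Scope ereal_scope.

Theorem proposition5p7 (R : realType) (tT : R) (htT : (1 < tT)%R) :
  ((266 / 100)%:E <= irrationality_exponent tT f_a) /\
  (irrationality_exponent tT f_a <= (281 / 100)%:E).
Proof.
split.
  apply: ereal_sup_ubound; exists (266 / 100)%R => //.
  exact: approx_exponents_ge.
by apply: ge_ereal_sup => _ [tau approx <-]; rewrite lee_fin (approx_exponents_le htT).
Qed.
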